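(* Let $(E,\langle\cdot,\cdot\rangle,\rho,\circ)$ be a pre-Courant algebroid over $M$ with Jacobiator $J$. Then $J\in C^{3}_{\mathcal D}(E,\operatorname{Ker}(\rho))$ and $\partial J=0$. Equivalently, $J^\flat\in C^4_{\mathcal D}(E)$ and $\mathcal D(J^\flat)=0$.
   Context: A Courant vector bundle over a smooth manifold $M$ is a vector bundle $E\to M$ with a fibrewise nondegenerate symmetric bilinear form $\langle\cdot,\cdot\rangle$ (extended $C^\infty(M)$-bilinearly to sections) and a bundle map $\rho:E\to TM$ such that $\rho\circ\rho^*=0$, where $\rho^*:T^*M\to E^*\cong E$ is the dual of $\rho$ followed by the identification $E^*\cong E$ via $\langle\cdot,\cdot\rangle$. A pre-Courant algebroid structure on it is an $\mathbb R$-bilinear operation $\circ$ on $\Gamma(E)$ such that for all $e_1,e_2,e_3\in\Gamma(E)$: (i) $\rho(e_1\circ e_2)=[\rho(e_1),\rho(e_2)]$; (ii) $\langle e_1\circ e_1,e_2\rangle=\frac12\rho(e_2)\langle e_1,e_1\rangle$; (iii) $\rho(e_1)\langle e_2,e_3\rangle=\langle e_1\circ e_2,e_3\rangle+\langle e_2,e_1\circ e_3\rangle$. Define $\mathcal D:C^\infty(M)\to\Gamma(E)$ by $\langle\mathcal Df,e\rangle=\rho(e)f$. The Jacobiator is $J(e_1,e_2,e_3)=e_1\circ(e_2\circ e_3)-(e_1\circ e_2)\circ e_3-e_2\circ(e_1\circ e_3)$. $C^k_{\mathcal D}(E)$ is the space of skew-symmetric $C^\infty(M)$-multilinear maps $\psi:\Gamma(E)^k\to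 C^\infty(M)$ with $\psi(\mathcal Df,e_2,\dots,e_k)=0$ for all $f\in C^\infty(M)$ (equivalently, sections of $\wedge^k\operatorname{Ker}(\rho)$ viewed in $\wedge^kE^*$ via $\langle\cdot,\cdot\rangle$). $C^k_{\mathcal D}(E,\operatorname{Ker}(\rho))$ is the space of $C^\infty(M)$-multilinear maps $\phi:\Gamma(E)^k\to\Gamma(E)$ such that (1) $\phi$ takes values in $\Gamma(\operatorname{Ker}\rho)$, (2) $\phi(\mathcal Df,e_2,\dots,e_k)=0$ for all $f$, (3) $(e_1,\dots,e_{k+1})\mapsto\langle\phi(e_1,\dots,e_k),e_{k+1}\rangle$ is totally skew-symmetric. For such $\phi$, $\phi^\flat\in C^{k+1}_{\mathcal D}(E)$ is $\phi^\flat(e_1,\dots,e_{k+1})=\langle\phi(e_1,\dots,e_k),e_{k+1}\rangle$. $\mathcal D:C^k_{\mathcal D}(E)\to C^{k+1}_{\mathcal D}(E)$: $\mathcal D\psi(e_1,\dots,e_{k+1})=\sum_{i=1}^{k+1}(-1)^{i+1}\rho(e_i)\psi(e_1,\dots,\widehat{e_i},\dots,e_{k+1})+\sum_{i<j}(-1)^{i+j}\psi(e_i\circ e_j,e_1,\dots,\widehat{e_i},\dots,\widehat{e_j},\dots,e_{k+1})$. $\partial:C^k_{\mathcal D}(E,\operatorname{Ker}\rho)\to C^{k+1}_{\mathcal D}(E,\operatorname{Ker}\rho)$: $\partial\phi(e_1,\dots,e_{k+1})=\sum_{i=1}^k(-1)^{i+1}e_i\circ\phi(e_1,\dots,\widehat{e_i},\dots,e_{k+1})+(-1)^{k+1}\phi(e_1,\dots,e_k)\circ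 e_{k+1}+\sum_{i<j}(-1)^{i+j}\phi(e_i\circ e_j,e_1,\dots,\widehat{e_i},\dots,\widehat{e_j},\dots,e_{k+1})$. *)

(* Algebraic model of a pre-Courant algebroid:
   C^oo(M) is an abstract commutative R-algebra A, Gamma(E) an A-module E,
   vector fields are derivations of A (Gamma(TM) = Der(C^oo(M))).
   k-ary maps Gamma(E)^k -> ... are encoded as functions on sequences,
   only their values on sequences of size k being relevant. *)
From HB Require Import structures.
From mathcomp Require Import all_boot all_order all_algebra.
From mathcomp Require Import reals.
Set Implicit Arguments. Unset Strict Implicit. Unset Printing Implicit Defensive.
Import Order.TTheory GRing.Theory Num.Theory.
Local Open Scope ring_scope.

Section PreCourant.
Variables (R : realType) (A : comAlgType R) (E : lmodType A).

Definition is_derivation (X : A -> A) : Prop :=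
  (forall (r : R) (f g : A), X (r *: f + g) = r *: X f + X g) /\
  (forall f g : A, X (f * g) = f * X g + g * X f).

Record is_preCourant (pair : E -> E -> A) (anchor : E -> A -> A)
    (circ : E -> E -> E) : Prop := {
  pair_linl : forall (a : A) x y z, pair (a *: x + y) z = a * pair x z + pair y z;
  pair_sym : forall x y, pair x y = pair y x;
  (* fibrewise nondegenerate: Gamma(E) -> Gamma(E^* ) is an isomorphism *)
  pair_nondeg : forall x, (forall y, pair x y = 0) -> x = 0;
  pair_onto : forall l : E -> A,
      (forall (a : A) x y, l (a *: x + y) = a * l x + l y) ->
      exists e, forall x, pair e x = l x;
  anchor_lin : forall (a : A) x y f, anchor (a *: x + y) f = a * anchor x f + anchor y f;
  anchor_der : forall e, is_derivation (anchor e);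
  (* rho o rho^* = 0 : rho^*(df) is the x with <x,e> = rho(e) f *)
  anchor_dual0 : forall f x, (forall e, pair x e = anchor e f) ->
      forall g, anchor x g = 0;
  circ_linl : forall (r : R) x y z,
      circ (r%:A *: x + y) z = r%:A *: circ x z + circ y z;
  circ_linr : forall (r : R) x y z,
      circ z (r%:A *: x + y) = r%:A *: circ z x + circ z y;
  axiom_i : forall e1 e2 f,
      anchor (circ e1 e2) f = anchor e1 (anchor e2 f) - anchor e2 (anchor e1 f);
  axiom_ii : forall e1 e2,
      pair (circ e1 e1) e2 = (2%:R^-1 : R) *: anchor e2 (pair e1 e1);
  axiom_iii : forall e1 e2 e3,
      anchor e1 (pair e2 e3) = pair (circ e1 e2) e3 + pair e2 (circ e1 e3)
}.

Variables (pair : E -> E -> A) (anchor : E -> A -> A) (circ : E -> E -> E)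
  (D : A -> E).

Definition rem_at (T : Type) (i : nat) (s : seq T) : seq T :=
  take i s ++ drop i.+1 s.

Definition swap_at (p q : nat) (s : seq E) : seq E :=
  set_nth 0 (set_nth 0 s p (nth 0 s q)) q (nth 0 s p).

Definition jac3 (e1 e2 e3 : E) : E :=
  circ e1 (circ e2 e3) - circ (circ e1 e2) e3 - circ e2 (circ e1 e3).
Definition jacobiator (s : seq E) : E := jac3 (nth 0 s 0) (nth 0 s 1) (nth 0 s 2).

Definition multilinE (k : nat) (phi : seq E -> E) : Prop :=
  forall s p (a : A) x y, size s = k -> (p < k)%N ->
    phi (set_nth 0 s p (a *: x + y)) =
      a *: phi (set_nth 0 s p x) + phi (set_nth 0 s p y).

Definition multilinA (k : nat) (psi : seq E -> A) : Prop :=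
  forall s p (a : A) x y, size s = k -> (p < k)%N ->
    psi (set_nth 0 s p (a *: x + y)) =
      a * psi (set_nth 0 s p x) + psi (set_nth 0 s p y).

Definition skewA (k : nat) (psi : seq E -> A) : Prop :=
  forall s p q, size s = k -> (p < k)%N -> (q < k)%N -> p != q ->
    psi (swap_at p q s) = - psi s.

Definition flat (k : nat) (phi : seq E -> E) : seq E -> A :=
  fun s => pair (phi (take k s)) (nth 0 s k).

Definition CkD (k : nat) (psi : seq E -> A) : Prop :=
  [/\ multilinA k psi, skewA k psi &
      forall f s, size s = k.-1 -> psi (D f :: s) = 0].

Definition CkE (k : nat) (phi : seq E -> E) : Prop :=
  [/\ multilinE k phi,
      (forall s, size s = k -> forall g, anchor (phi s) g = 0),
      (forall f s, size s = k.-1 -> phi (D f :: s) = 0) &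
      skewA k.+1 (flat k phi)].

(* D : C^k_D(E) -> C^{k+1}_D(E)  (0-based indices: (-1)^(i+1) -> (-1)^i) *)
Definition dcobA (k : nat) (psi : seq E -> A) : seq E -> A := fun s =>
  \sum_(0 <= i < k.+1) (-1) ^+ i * anchor (nth 0 s i) (psi (rem_at i s)) +
  \sum_(0 <= j < k.+1) \sum_(0 <= i < j)
     (-1) ^+ (i + j) * psi (circ (nth 0 s i) (nth 0 s j) :: rem_at i (rem_at j s)).

Definition dcobE (k : nat) (phi : seq E -> E) : seq E -> E := fun s =>
  \sum_(0 <= i < k) (-1) ^+ i *: circ (nth 0 s i) (phi (rem_at i s)) +
  (-1) ^+ k.+1 *: circ (phi (take k s)) (nth 0 s k) +
  \sum_(0 <= j < k.+1) \sum_(0 <= i < j)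
     (-1) ^+ (i + j) *: phi (circ (nth 0 s i) (nth 0 s j) :: rem_at i (rem_at j s)).

End PreCourant.

From HB Require Import structures.
From mathcomp Require Import all_boot all_order all_algebra.
From mathcomp Require Import reals.
From mathcomp Require Import ring.
Set Implicit Arguments. Unset Strict Implicit. Unset Printing Implicit Defensive.
Import Order.TTheory GRing.Theory Num.Theory.
Local Open Scope ring_scope.

(* Polarizing axiom (ii) gives x o y + y o x = D<x,y>, and together with (i)
   and (iii) this yields D f o x = 0 and x o D f = D(rho(x) f).  Hence the
   Jacobiator is skew in its first two arguments, and (iii) shows that it is
   skew in its last two; expanding <J(a,b,c),d> with (iii) and (i) shows that
   J^flat is skew in its last two slots as well.  Being A-linear in its last
   slot, the totally skew J^flat is A-multilinear.  Once a few of its terms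
   are rewritten by these symmetries, partial J = 0 is an identity of the
   free non-associative algebra; pairing it with a fifth section and using
   (iii) and the polarized (ii) turns it into D(J^flat) = 0. *)

Section AdditiveMorphism.
Variables (U V : zmodType) (f : U -> V).
Hypothesis fD : {morph f : x y / x + y}.

Lemma morph_add0 : f 0 = 0.
Proof. by apply: (@addrI _ (f 0)); rewrite -fD !addr0. Qed.

Lemma morph_addN : {morph f : x / - x}.
Proof. by move=> x; apply: (@addrI _ (f x)); rewrite -fD !subrr morph_add0. Qed.

Lemma morph_addB : {morph f : x y / x - y}.
Proof. by move=> x y; rewrite fD morph_addN. Qed.

End AdditiveMorphism.

Section PreCourantJacobiator.
Variables (R : realType) (A : comAlgType R) (E : lmodType A)
    (pair : E -> E -> A) (anchor : E -> A -> A) (circ : E -> E -> E)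
    (D : A -> E).
Hypothesis preC : is_preCourant pair anchor circ.
Hypothesis pairD : forall f e, pair (D f) e = anchor e f.

Lemma pairDl z : {morph pair^~ z : x y / x + y}.
Proof. by move=> x y; have := pair_linl preC 1 x y z; rewrite scale1r mul1r. Qed.
Lemma pairNl z : {morph pair^~ z : x / - x}. Proof. exact: morph_addN (pairDl z). Qed.
Lemma pairBl z : {morph pair^~ z : x y / x - y}. Proof. exact: morph_addB (pairDl z). Qed.
Lemma pair0l z : pair 0 z = 0. Proof. exact: morph_add0 (pairDl z). Qed.
Lemma pairZl a x z : pair (a *: x) z = a * pair x z.
Proof. by have := pair_linl preC a x 0 z; rewrite addr0 pair0l addr0. Qed.

Lemma pairDr z : {morph pair z : x y / x + y}.
Proof. by move=> x y /=; rewrite !(pair_sym preC z) pairDl. Qed.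
Lemma pairZr a x z : pair z (a *: x) = a * pair z x.
Proof. by rewrite !(pair_sym preC z) pairZl. Qed.

Lemma pair_inj x y : (forall e, pair x e = pair y e) -> x = y.
Proof.
move=> xy; apply/eqP; rewrite -subr_eq0; apply/eqP.
by apply: (pair_nondeg preC) => e; rewrite pairBl xy subrr.
Qed.

Lemma anchorDl f : {morph anchor^~ f : x y / x + y}.
Proof. by move=> x y; have := anchor_lin preC 1 x y f; rewrite scale1r mul1r. Qed.
Lemma anchorBl f : {morph anchor^~ f : x y / x - y}.
Proof. exact: morph_addB (anchorDl f). Qed.

Lemma anchorDr e : {morph anchor e : f g / f + g}.
Proof. by move=> f g; have := (anchor_der preC e).1 1 f g; rewrite !scale1r. Qed.
Lemma anchorBr e : {morph anchor e : f g / f - g}.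
Proof. exact: morph_addB (anchorDr e). Qed.
Lemma anchor0r e : anchor e 0 = 0. Proof. exact: morph_add0 (anchorDr e). Qed.

Lemma circDl z : {morph circ^~ z : x y / x + y}.
Proof. by move=> x y; have := circ_linl preC 1 x y z; rewrite !scale1r. Qed.
Lemma circNl z : {morph circ^~ z : x / - x}. Proof. exact: morph_addN (circDl z). Qed.
Lemma circBl z : {morph circ^~ z : x y / x - y}. Proof. exact: morph_addB (circDl z). Qed.
Lemma circ0l z : circ 0 z = 0. Proof. exact: morph_add0 (circDl z). Qed.

Lemma circDr z : {morph circ z : x y / x + y}.
Proof. by move=> x y; have := circ_linr preC 1 x y z; rewrite !scale1r. Qed.
Lemma circNr z : {morph circ z : x / - x}. Proof. exact: morph_addN (circDr z). Qed.
Lemma circBr z : {morph circ z : x y / x - y}. Proof. exact: morph_addB (circDr z). Qed.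
Lemma circ0r z : circ z 0 = 0. Proof. exact: morph_add0 (circDr z). Qed.

(* Identities in the module E are checked after pairing with an arbitrary
   section, where [ring] is available. *)
Ltac pair_ring := apply: pair_inj => ?; rewrite ?(pairDl, pairNl, pairBl, pair0l); ring.

Lemma DB f g : D (f - g) = D f - D g.
Proof. by apply: pair_inj => e; rewrite pairBl !pairD anchorBr. Qed.
Lemma D0 : D 0 = 0.
Proof. by apply: pair_inj => e; rewrite pair0l !pairD anchor0r. Qed.

Lemma pair_circl x y z : pair (circ x y) z = anchor x (pair y z) - pair y (circ x z).
Proof. by rewrite (axiom_iii preC) addrK. Qed.

Lemma anchor_pair_circC x y e :
  anchor e (pair x y) = pair (circ x y) e + pair (circ y x) e.
Proof.
set c : R := 2^-1; set w := anchor e (pair x y).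
have half_twice : c *: w + c *: w = w.
  by rewrite -scalerDl -mulr2n -mulr_natr mulVf ?pnatr_eq0 // scale1r.
have := axiom_ii preC (x + y) e.
rewrite circDl !circDr !pairDl !(axiom_ii preC) !pairDr !anchorDr (pair_sym preC y x).
rewrite -/c -/w !scalerDr => polar; rewrite -[LHS]half_twice.
set u := c *: anchor e (pair x x) in polar *; set v := c *: anchor e (pair y y) in polar *.
apply: (@addrI _ (u + v)); transitivity (u + pair (circ x y) e + (pair (circ y x) e + v)).
  by rewrite polar; ring.
by ring.
Qed.

Lemma circC x y : circ x y + circ y x = D (pair x y).
Proof. by apply: pair_inj => e; rewrite pairDl pairD anchor_pair_circC. Qed.

Lemma circ_Dr x f : circ x (D f) = D (anchor x f).
Proof. by apply: pair_inj => e; rewrite pair_circl !pairD (axiom_i preC); ring. Qed.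

Lemma circ_Dl f x : circ (D f) x = 0.
Proof. by apply: (@addrI _ (circ x (D f))); rewrite addrC circC pairD circ_Dr addr0. Qed.

Notation J := (jac3 circ).

Lemma jac3_Dl f b c : J (D f) b c = 0.
Proof. by rewrite /jac3 !circ_Dl circ0l circ0r !subr0. Qed.

Lemma anchor_jac3 a b c g : anchor (J a b c) g = 0.
Proof. by rewrite /jac3 !anchorBl !(axiom_i preC) !anchorBr; ring. Qed.

Lemma jac3_swap12 a b c : J a b c = - J b a c.
Proof.
have sym_circ_c : circ (circ a b) c + circ (circ b a) c = 0.
  by rewrite -circDl circC circ_Dl.
apply/eqP; rewrite -addr_eq0 -oppr0 -sym_circ_c; apply/eqP; rewrite /jac3; pair_ring.
Qed.

Lemma jac3_swap23 a b c : J a b c = - J a c b.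
Proof.
have sym_defect : circ a (circ b c + circ c b) - (circ (circ a b) c + circ c (circ a b))
    - (circ (circ a c) b + circ b (circ a c)) = 0.
  rewrite !circC circ_Dr -!DB (pair_sym preC (circ a c)) -D0; congr D.
  by rewrite (axiom_iii preC); ring.
rewrite circDr in sym_defect.
apply/eqP; rewrite -addr_eq0 -sym_defect; apply/eqP; rewrite /jac3; pair_ring.
Qed.

Lemma pair_jac3_swap a b c d : pair (J a b c) d = - pair (J a b d) c.
Proof.
rewrite /jac3 !pairBl.
rewrite (pair_circl a (circ b c) d) (pair_circl b c (circ a d)) (pair_circl b (circ a c) d).
rewrite (pair_circl a c (circ b d)) (pair_circl (circ a b) c d) (pair_circl b c d).
rewrite (pair_circl a c d) !anchorBr !(axiom_i preC) !(pair_sym preC _ c).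
ring.
Qed.


Lemma jac3_rot a b c : J a b c = J b c a.
Proof. by rewrite jac3_swap12 jac3_swap23 opprK. Qed.

Lemma pair_jac3_cyc a b c d : pair (J a b c) d = - pair (J d a b) c.
Proof. by rewrite pair_jac3_swap -jac3_rot jac3_swap12 pairNl. Qed.

Lemma jac3_linr a b z x y : J a b (z *: x + y) = z *: J a b x + J a b y.
Proof.
apply: pair_inj => e; rewrite (pairDl e (z *: _)) pairZl !(pair_jac3_swap a b _ e).
by rewrite pairDr pairZr; ring.
Qed.

Lemma jac3_linm a c z x y : J a (z *: x + y) c = z *: J a x c + J a y c.
Proof. by rewrite jac3_swap23 jac3_linr (jac3_swap23 a x) (jac3_swap23 a y) scalerN opprD. Qed.

Lemma jac3_linl b c z x y : J (z *: x + y) b c = z *: J x b c + J y b c.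
Proof. by rewrite jac3_swap12 jac3_linm (jac3_swap12 x) (jac3_swap12 y) scalerN opprD. Qed.

Lemma jacobiator_multilin : multilinE 3 (jacobiator circ).
Proof.
move=> s p z x y; case: s => [|a [|b [|c [|? ?]]]] // _.
by case: p => [|[|[|p]]] // _; rewrite /jacobiator /=;
  [exact: jac3_linl | exact: jac3_linm | exact: jac3_linr].
Qed.

Lemma flat_jacobiator_multilin : multilinA 4 (flat pair 3 (jacobiator circ)).
Proof.
move=> s p z x y; case: s => [|a [|b [|c [|d [|? ?]]]]] // _.
case: p => [|[|[|[|p]]]] // _; rewrite /flat /jacobiator /=.
- by rewrite jac3_linl pairDl pairZl.
- by rewrite jac3_linm pairDl pairZl.
- by rewrite jac3_linr pairDl pairZl.
- by rewrite pairDr pairZr.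
Qed.

Lemma flat_jacobiator_skew : skewA 4 (flat pair 3 (jacobiator circ)).
Proof.
have swap01 a b c d : pair (J a b c) d = - pair (J b a c) d.
  by rewrite jac3_swap12 pairNl.
have swap12 a b c d : pair (J a b c) d = - pair (J a c b) d.
  by rewrite jac3_swap23 pairNl.
move=> s p q; case: s => [|a [|b [|c [|d [|? ?]]]]] // _.
rewrite /flat /swap_at /jacobiator.
case: p => [|[|[|[|p]]]] // _; case: q => [|[|[|[|q]]]] // _ _ /=;
  first [ by rewrite swap01
        | by rewrite swap12
        | by rewrite pair_jac3_swap
        | by rewrite swap01 swap12 swap01 !opprK
        | by rewrite swap12 pair_jac3_swap swap12 !opprK
        | by rewrite swap01 swap12 pair_jac3_swap swap12 swap01 !opprK ].
Qed.

Lemma dcobE_jacobiator a b c d : dcobE circ 3 (jacobiator circ) [:: a; b; c; d] = 0.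
Proof.
rewrite /dcobE !big_nat_recr //= !big_geq // /jacobiator /rem_at /=.
rewrite (jac3_swap12 (circ a c) b d) (jac3_swap12 (circ b c) a d).
rewrite (jac3_rot (circ a d)) (jac3_rot (circ b d)) (jac3_rot (circ c d)).
apply: pair_inj => e; rewrite /jac3 !(circDr, circBr, circNr, circDl, circBl, circNl).
by rewrite !(pairDl, pairBl, pairNl, pairZl, pair0l); ring.
Qed.

Lemma dcobA_flat_jacobiator a b c d e :
  dcobA anchor circ 4 (flat pair 3 (jacobiator circ)) [:: a; b; c; d; e] = 0.
Proof.
have := congr1 (pair^~ e) (dcobE_jacobiator a b c d).
rewrite /dcobE !big_nat_recr //= !big_geq // /jacobiator /rem_at /=.
rewrite !(pairDl, pairZl, pair0l) => paired_dJ; apply: etrans paired_dJ.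
rewrite /dcobA !big_nat_recr //= !big_geq // /flat /jacobiator /rem_at /=.
rewrite (anchor_pair_circC (J a b c) d e) !(axiom_iii preC).
rewrite !(pair_jac3_cyc _ _ _ (circ _ e)) /jac3.
rewrite !(circDr, circBr, circNr, circDl, circBl, circNl).
by rewrite !(pairDl, pairBl, pairNl, pairZl, pair0l); ring.
Qed.

End PreCourantJacobiator.

Theorem theorem3p4 (R : realType) (A : comAlgType R) (E : lmodType A)
    (pair : E -> E -> A) (anchor : E -> A -> A) (circ : E -> E -> E)
    (D : A -> E) :
  is_preCourant pair anchor circ ->
  (forall f e, pair (D f) e = anchor e f) ->
  [/\ CkE pair anchor D 3 (jacobiator circ),
      (forall s, size s = 4%N -> dcobE circ 3 (jacobiator circ) s = 0),
      CkD D 4 (flat pair 3 (jacobiator circ)) &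
      (forall s, size s = 5%N ->
         dcobA anchor circ 4 (flat pair 3 (jacobiator circ)) s = 0)].
Proof.
move=> preC pairD; split; [split| |split|].
- exact: jacobiator_multilin preC pairD.
- by move=> s _ g; exact: anchor_jac3 preC _ _ _ g.
- by move=> f [|b [|c [|? ?]]] // _; exact: jac3_Dl preC pairD _ b c.
- exact: flat_jacobiator_skew preC pairD.
- by move=> [|a [|b [|c [|d [|? ?]]]]] // _; exact: dcobE_jacobiator preC pairD a b c d.
- exact: flat_jacobiator_multilin preC pairD.
- exact: flat_jacobiator_skew preC pairD.
- move=> f [|b [|c [|d [|? ?]]]] // _.
  by rewrite /flat /jacobiator /= (jac3_Dl preC pairD) (pair0l preC).
- by move=> [|a [|b [|c [|d [|e [|? ?]]]]]] // _; exact: dcobA_flat_jacobiator preC pairD a b c d e.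
Qed.
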